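(* Let $n\ge 1$, let $Q_n$ be the universal algebra of pseudo-roots, and let $\Gamma_n$ be the graph of subsets of $\{1,\dots,n\}$ (both defined in the context). Let $Z=\{x_{A_1,i_1},x_{A_2,i_2},\dots,x_{A_n,i_n}\}\subseteq Q_n$ be a set of pseudo-roots such that $i_1,i_2,\dots,i_n$ are pairwise distinct. If the set of edges $\{(A_1,i_1),(A_2,i_2),\dots,(A_n,i_n)\}$ of $\Gamma_n$ is connected, then $Z$ is a sufficient set, i.e. the $du$-envelope of $Z$ contains a defining set of pseudo-roots of $\mathcal P(t)$.
   Context: Fix a field $k$. The algebra $Q_n$ is the associative unital $k$-algebra with generators $x_{A,i}$, where $A\subseteq\{1,\dots,n\}$ and $i\in\{1,\dots,n\}\setminus A$ (these generators are called pseudo-roots), subject to the relations $x_{A\cup\{i\},j}+x_{A,i}=x_{A\cup\{j\},i}+x_{A,j}$ and $x_{A\cup\{i\},j}\,x_{A,i}=x_{A\cup\{j\},i}\,x_{A,j}$ for all $A\subseteq\{1,\dots,n\}$ and all $i\ne j$ with $i,j\notin A$. Let $t$ be a central indeterminate. For an ordering $(i_1,\dots,i_n)$ of $\{1,\dots,n\}$ put $A_1=\emptyset$, $A_k=\{i_1,\dots,i_{k-1}\}$, and $\mathcal P(t)=(t-x_{A_n,i_n})(t-x_{A_{n-1},i_{n-1}})\cdots(t-x_{A_1,i_1})\in Q_n[t]$; this polynomial is independent of the ordering. A set $Y$ of pseudo-roots is a defining set if $\mathcal P(t)=(t-y_n)(t-y_{n-1})\cdots(t-y_1)$ for some $y_1,\dots,y_n\in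 Y$. The graph $\Gamma_n$ has as vertices all subsets of $\{1,\dots,n\}$ and as edges the pairs $(A,i)$ with $i\notin A$; the edge $(A,i)$ has tail $A\cup\{i\}$ and head $A$ (it corresponds to the pseudo-root $x_{A,i}$). Operations on pseudo-roots: for two distinct pseudo-roots $x_{A,i},x_{B,j}$ whose edges have a common head ($A=B$), a pseudo-root $\xi$ is obtained from the ordered pair $(x_{A,i},x_{B,j})$ by the $u$-operation if $(x_{A,i}-x_{B,j})x_{A,i}=\xi(x_{A,i}-x_{B,j})$; for two distinct pseudo-roots whose edges have a common tail ($A\cup\{i\}=B\cup\{j\}$), a pseudo-root $\eta$ is obtained from the ordered pair $(x_{A,i},x_{B,j})$ by the $d$-operation if $(x_{A,i}-x_{B,j})\eta=x_{A,i}(x_{A,i}-x_{B,j})$. The $du$-envelope of a set $Z$ of pseudo-roots is the set of pseudo-roots obtainable from elements of $Z$ by successive applications of $d$- and $u$-operations (including $Z$ itself). $Z$ is sufficient if its $du$-envelope contains a defining set. A set $G$ of edges is connected if the undirected graph whose vertices are the heads and tails of edges of $G$ and whose edges are the edges of $G$ (directions forgotten) is connected. *)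

From HB Require Import structures.
From mathcomp Require Import all_boot all_order all_algebra.
Set Implicit Arguments. Unset Strict Implicit. Unset Printing Implicit Defensive.
Import GRing.Theory.
Local Open Scope ring_scope.

(* {1,...,n} is represented by 'I_n; subsets by {set 'I_n}.
   A pseudo-root index is a pair (A, i) with i \notin A; the pseudo-root
   x_{A,i} is then x A i. *)
Definition pr (n : nat) := ({set 'I_n} * 'I_n)%type.

Definition valid_pr n (p : pr n) : bool := p.2 \notin p.1.

Definition Qn_rel (k : fieldType) (n : nat) (R : algType k)
    (x : {set 'I_n} -> 'I_n -> R) : Prop :=
  forall (A : {set 'I_n}) (i j : 'I_n), i != j -> i \notin A -> j \notin A ->
    x (i |: A) j + x A i = x (j |: A) i + x A j /\
    x (i |: A) j * x A i = x (j |: A) i * x A j.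

(* An identity between expressions in the generators holds in Q_n iff it
   holds for every k-algebra and every family satisfying the relations
   (universal property of Q_n, which is itself a nonzero k-algebra). *)
Definition holds_in_Qn (k : fieldType) (n : nat)
    (E : forall R : algType k, ({set 'I_n} -> 'I_n -> R) -> Prop) : Prop :=
  forall (R : algType k) (x : {set 'I_n} -> 'I_n -> R), Qn_rel x -> E R x.

Definition xp n (R : Type) (x : {set 'I_n} -> 'I_n -> R) (p : pr n) : R :=
  x p.1 p.2.

Definition u_op (k : fieldType) n (a b c : pr n) : Prop :=
  [/\ valid_pr a && valid_pr b && valid_pr c, a != b, a.1 = b.1 &
    (@holds_in_Qn k n (fun R x =>
      (xp x a - xp x b) * xp x a = xp x c * (xp x a - xp x b)))].

Definition d_op (k : fieldType) n (a b c : pr n) : Prop :=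
  [/\ valid_pr a && valid_pr b && valid_pr c, a != b, a.2 |: a.1 = b.2 |: b.1 &
    (@holds_in_Qn k n (fun R x =>
      (xp x a - xp x b) * xp x c = xp x a * (xp x a - xp x b)))].

Inductive du_envelope (k : fieldType) n (Z : {set pr n}) : pr n -> Prop :=
  | env_base p : p \in Z -> du_envelope k Z p
  | env_u a b c : du_envelope k Z a -> du_envelope k Z b -> u_op k a b c ->
      du_envelope k Z c
  | env_d a b c : du_envelope k Z a -> du_envelope k Z b -> d_op k a b c ->
      du_envelope k Z c.

(* The polynomial P(t) in Q_n[t] computed with the ordering (1,...,n):
   P(t) = (t - x_{A_n,n}) ... (t - x_{A_1,1}), A_m = {1,...,m-1}. *)
Definition prefix_set n (m : 'I_n) : {set 'I_n} := [set j : 'I_n | (j < m)%N].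

Definition Ppoly n (R : nzRingType) (x : {set 'I_n} -> 'I_n -> R) : {poly R} :=
  \prod_(m < n) ('X - (x (prefix_set (rev_ord m)) (rev_ord m))%:P).

Definition defining_set (k : fieldType) n (Y : {set pr n}) : Prop :=
  (forall p, p \in Y -> valid_pr p) /\
  exists y : 'I_n -> pr n, (forall m, y m \in Y) /\
    @holds_in_Qn k n (fun R x =>
      Ppoly x = \prod_(m < n) ('X - (xp x (y (rev_ord m)))%:P)).

Definition sufficient (k : fieldType) n (Z : {set pr n}) : Prop :=
  exists Y : {set pr n}, (forall p, p \in Y -> du_envelope k Z p) /\
    defining_set k Y.

(* Connectedness of a set of edges of Gamma_n given by (A m, i m), m < n:
   the undirected graph on heads and tails with these edges is connected. *)
Definition edge_adj n (A : 'I_n -> {set 'I_n}) (i : 'I_n -> 'I_n)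
    : rel {set 'I_n} :=
  fun u v => [exists m : 'I_n,
    ((u == A m) && (v == i m |: A m)) || ((v == A m) && (u == i m |: A m))].

Definition edge_vertices n (A : 'I_n -> {set 'I_n}) (i : 'I_n -> 'I_n)
    : {set {set 'I_n}} :=
  [set A m | m in 'I_n] :|: [set i m |: A m | m in 'I_n].

Definition edges_connected n (A : 'I_n -> {set 'I_n}) (i : 'I_n -> 'I_n)
    : Prop :=
  forall u v, u \in edge_vertices A i -> v \in edge_vertices A i ->
    connect (edge_adj A i) u v.

From HB Require Import structures.
From mathcomp Require Import all_boot all_order all_algebra.
Set Implicit Arguments. Unset Strict Implicit. Unset Printing Implicit Defensive.
Import GRing.Theory.

(* A walk up Gamma_n from a set B along a duplicate-free list (a_1, ..., a_r) uses the
   pseudo-roots x_{B,a_1}, x_{B+a_1,a_2}, ...  The relations of Q_n say that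
   exchanging two consecutive labels does not change the product of the factors t - x,
   so the edges of any complete walk from the empty set form a defining set.

   Two edges with a common head B and labels a, l give, by the u-operation, the edge
   (B+a, l) one floor higher; two edges with a common tail give, by the d-operation, the
   edge one floor lower.  Hence an enveloped walk can be translated up (resp. down) by a
   new label l, starting from one enveloped edge labelled l at its bottom (resp. top).

   Absorb the edges of Z one at a time, keeping a base B such that every endpoint of an
   absorbed edge lies on an enveloped walk from B whose labels are exactly those absorbed.
   By connectedness a new edge (A, l) touches an old endpoint v.  If v = A is its head,
   translate the part of v's walk above v up by l and splice in the new edge; the other
   walks are extended at the top by the edge labelled l produced by the translation.  If
   v = A+l is its tail, translate the part below v down by l, splice, and lower the base
   to B-l.  Once every edge is absorbed the labels exhaust {1..n}, so B is empty. *)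

Lemma big_rev_tuple (R : Type) (idx : R) (op : R -> R -> R) (I : Type) (n : nat)
    (t : n.-tuple I) (F : I -> R) :
  \big[op/idx]_(x <- rev t) F x = \big[op/idx]_(j < n) F (tnth t (rev_ord j)).
Proof.
rewrite (big_tuple _ _ (rev_tuple t)); apply: eq_bigr => j _; congr F.
have x0 := tnth t j.
by rewrite !(tnth_nth x0) /= nth_rev size_tuple.
Qed.

Section SeqSets.

Variable T : finType.
Implicit Types (s : seq T) (B S : {set T}).

Lemma disjoint_setU1 s a B :
  [disjoint s & a |: B] = (a \notin s) && [disjoint s & B].
Proof.
rewrite !disjoint_has -negb_or -has_pred1 -has_predU.
by congr (~~ _); apply: eq_has => y; rewrite !inE eq_sym.
Qed.

Lemma setU_cons B a s : B :|: [set:: a :: s] = (a |: B) :|: [set:: s].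
Proof. by rewrite set_cons setUCA setUA. Qed.

Lemma set_seq_eqi s S : s =i S -> [set:: s] = S.
Proof. by move=> eqS; apply/setP => y; rewrite inE eqS. Qed.

Lemma mem_cat_insert s1 s2 S a : s1 ++ s2 =i S -> s1 ++ a :: s2 =i a |: S.
Proof.
move=> eqS y; rewrite in_setU1 -eqS !mem_cat inE.
by case: (y == a); rewrite ?orbT.
Qed.

End SeqSets.

Section Walks.

Variable n : nat.
Implicit Types (B : {set 'I_n}) (s : seq 'I_n) (E : pr n -> Prop).

Fixpoint walk E B s : Prop :=
  if s is a :: s' then [/\ a \notin B, E (B, a) & walk E (a |: B) s'] else True.

Fixpoint walk_edges B s : seq (pr n) :=
  if s is a :: s' then (B, a) :: walk_edges (a |: B) s' else [::].

Lemma walk_cat E B s t :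
  walk E B (s ++ t) <-> walk E B s /\ walk E (B :|: [set:: s]) t.
Proof.
elim: s B => [|a s IH] B /=; first by rewrite set_nil setU0; split=> // -[].
rewrite setU_cons; split => [[aB Ea /IH[]] | [[aB Ea wa] wt]] //.
by split => //; apply/IH.
Qed.

Lemma walk_fresh E B s : walk E B s -> uniq s && [disjoint s & B].
Proof.
elim: s B => [|a s IH] B /=; first by move=> _; apply/pred0P.
case=> aB _ /IH /andP[us]; rewrite disjoint_setU1 => /andP[as_ dis].
by rewrite /= as_ us disjoint_cons aB dis.
Qed.

Lemma walk_edgesP E B s p : walk E B s -> p \in walk_edges B s -> E p /\ valid_pr p.
Proof.
elim: s B => [|a s IH] B //= [aB Ea w]; rewrite inE => /orP[/eqP -> // | ].
exact: IH.
Qed.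

Lemma size_walk_edges B s : size (walk_edges B s) = size s.
Proof. by elim: s B => [|a s IH] B //=; rewrite IH. Qed.

Lemma walk_edgesE B s : uniq s ->
  walk_edges B s = [seq (B :|: [set:: take (index a s) s], a) | a <- s].
Proof.
elim: s B => [|a s IH] B //= /andP[as_ us].
rewrite eqxx take0 set_nil setU0 IH //; congr (_ :: _); apply/eq_in_map => b bs.
by rewrite (negbTE (memPnC as_ b bs)) /= setU_cons.
Qed.

End Walks.

Section WalkPoly.

Local Open Scope ring_scope.

Lemma XsubC_mul_swap (R : nzRingType) (c1 c2 c3 c4 : R) :
  c1 + c2 = c3 + c4 -> c1 * c2 = c3 * c4 ->
  ('X - c1%:P) * ('X - c2%:P) = ('X - c3%:P) * ('X - c4%:P).
Proof.
have expand (a b : R) :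
    ('X - a%:P) * ('X - b%:P) = 'X * 'X - (a + b)%:P * 'X + (a * b)%:P.
  rewrite mulrBl !mulrBr polyCM polyCD mulrDl -(commr_polyX b%:P).
  by rewrite opprB opprD !addrA addrAC [in RHS]addrAC.
by move=> sum prod; rewrite !expand sum prod.
Qed.

Variables (n : nat) (R : nzRingType) (x : {set 'I_n} -> 'I_n -> R).
Implicit Types (B : {set 'I_n}) (s : seq 'I_n).

Definition walk_poly B s : {poly R} :=
  \prod_(p <- rev (walk_edges B s)) ('X - (xp x p)%:P).

Lemma walk_poly_cons B a s :
  walk_poly B (a :: s) = walk_poly (a |: B) s * ('X - (x B a)%:P).
Proof. by rewrite /walk_poly /= rev_cons big_rcons. Qed.

Lemma prefix_set_enum (j : 'I_n) : prefix_set j = [set:: take j (enum 'I_n)].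
Proof. by apply/setP => y; rewrite !inE in_take ?mem_enum // index_enum_ord. Qed.

Lemma Ppoly_walk_enum : Ppoly x = walk_poly set0 (enum 'I_n).
Proof.
rewrite /walk_poly walk_edgesE ?enum_uniq // -map_rev big_map.
have := big_rev_tuple 1 *%R (ord_tuple n)
  (fun j => 'X - (x (set0 :|: [set:: take (index j (enum 'I_n)) (enum 'I_n)]) j)%:P).
rewrite val_ord_tuple => ->; apply: eq_bigr => m _.
by rewrite tnth_ord_tuple set0U index_enum_ord -prefix_set_enum.
Qed.

End WalkPoly.

Section QnRelations.

Local Open Scope ring_scope.

Variables (k : fieldType) (n : nat) (R : algType k) (x : {set 'I_n} -> 'I_n -> R).
Hypothesis hx : Qn_rel x.
Implicit Types (B : {set 'I_n}) (s : seq 'I_n).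

Lemma Qn_rel_diff B a b : a != b -> a \notin B -> b \notin B ->
  x (b |: B) a - x (a |: B) b = x B a - x B b.
Proof.
move=> ab aB bB; have [sum _] := hx ab aB bB.
by rewrite -(addrK (x B b) (x (b |: B) a)) -sum addrAC [x (a |: B) b + _]addrC addrK.
Qed.

Lemma walk_poly_swap B a b s : a != b -> a \notin B -> b \notin B ->
  walk_poly x B (a :: b :: s) = walk_poly x B (b :: a :: s).
Proof.
move=> ab aB bB; rewrite !walk_poly_cons setUCA -!mulrA; congr (_ * _).
by have [sum prod] := hx ab aB bB; apply: XsubC_mul_swap.
Qed.

Lemma walk_poly_rem B s a : uniq s -> [disjoint s & B] -> a \in s ->
  walk_poly x B s = walk_poly x B (a :: rem a s).
Proof.
elim: s B => [|b s IH] B //= /andP[bs us]; rewrite disjoint_cons => /andP[bB dis].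
rewrite inE eq_sym; have [-> //|ab /= as_] := eqVneq b a.
have aB : a \notin B by rewrite (disjointFr dis as_).
rewrite walk_poly_cons (IH (b |: B)) ?disjoint_setU1 ?bs // -walk_poly_cons.
by rewrite walk_poly_swap // eq_sym.
Qed.

Lemma walk_poly_perm B s s' : uniq s -> [disjoint s & B] -> perm_eq s s' ->
  walk_poly x B s = walk_poly x B s'.
Proof.
elim: s B s' => [|a s IH] B s' /=; first by rewrite perm_sym => _ _ /perm_nilP ->.
move=> /andP[as_ us]; rewrite disjoint_cons => /andP[aB dis] ps.
have as' : a \in s' by rewrite -(perm_mem ps) mem_head.
have us' : uniq s' by rewrite -(perm_uniq ps) /= as_.
have dis' : [disjoint s' & B].
  by rewrite -(eq_disjoint (perm_mem ps)) disjoint_cons aB.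
rewrite [RHS](walk_poly_rem us' dis' as') !walk_poly_cons; congr (_ * _).
apply: IH; rewrite ?disjoint_setU1 ?as_ //.
by rewrite -(perm_cons a) (perm_trans ps) ?perm_to_rem.
Qed.

End QnRelations.

Lemma complete_walk_sufficient (k : fieldType) n (Z : {set pr n}) s :
  walk (du_envelope k Z) set0 s -> perm_eq s (enum 'I_n) -> sufficient k Z.
Proof.
move=> w ps; have /andP[us dis] := walk_fresh w.
have sz : size (walk_edges set0 s) == n.
  by rewrite size_walk_edges (perm_size ps) size_enum_ord.
exists [set p in walk_edges set0 s]; split; [|split].
- by move=> p; rewrite inE => /(walk_edgesP w)[].
- by move=> p; rewrite inE => /(walk_edgesP w)[].
exists (tnth (Tuple sz)); split; first by move=> m; rewrite inE mem_tnth.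
move=> R x hx; rewrite Ppoly_walk_enum -(walk_poly_perm hx us dis ps).
exact: (big_rev_tuple _ _ (Tuple sz)).
Qed.

Section Envelope.

Variables (k : fieldType) (n : nat) (Z : {set pr n}).
Implicit Types (B C V : {set 'I_n}) (s : seq 'I_n).
Local Notation E := (du_envelope k Z).

Lemma u_op_square B a b : a != b -> a \notin B -> b \notin B ->
  u_op k (B, a) (B, b) (b |: B, a).
Proof.
move=> ab aB bB; split.
- by rewrite /valid_pr /= !inE negb_or aB bB ab.
- by rewrite xpair_eqE (negbTE ab) andbF.
- by [].
move=> R x hx; have [_ prod] := hx B a b ab aB bB.
by rewrite /xp /= mulrBr -prod -mulrBl (Qn_rel_diff hx).
Qed.

Lemma d_op_square C a b : a != b -> a \notin C -> b \notin C ->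
  d_op k (b |: C, a) (a |: C, b) (C, a).
Proof.
move=> ab aC bC; split.
- by rewrite /valid_pr /= !inE !negb_or aC bC ab eq_sym ab.
- by rewrite xpair_eqE (negbTE ab) andbF.
- by rewrite /= setUCA.
move=> R x hx; have [_ prod] := hx C a b ab aC bC.
by rewrite /xp /= mulrBl prod -mulrBr (Qn_rel_diff hx).
Qed.

Lemma envelope_up B a b : a != b -> a \notin B -> b \notin B ->
  E (B, a) -> E (B, b) -> E (b |: B, a).
Proof. by move=> ab aB bB Ea Eb; apply: env_u Ea Eb (u_op_square ab aB bB). Qed.

Lemma envelope_down C a b : a != b -> a \notin C -> b \notin C ->
  E (b |: C, a) -> E (a |: C, b) -> E (C, a).
Proof. by move=> ab aC bC Ea Eb; apply: env_d Ea Eb (d_op_square ab aC bC). Qed.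

Lemma walk_shift_up V s l : walk E V s -> l \notin V -> l \notin s -> E (V, l) ->
  walk E (l |: V) s /\ E (V :|: [set:: s], l).
Proof.
elim: s V => [|a s IH] V /=; first by rewrite set_nil setU0.
move=> [aV Ea w] lV; rewrite inE negb_or => /andP[la ls] El.
have al : a != l by rewrite eq_sym.
have lV' : l \notin a |: V by rewrite !inE negb_or la.
have [w' Etop] := IH _ w lV' ls (envelope_up la lV aV El Ea).
split; last by rewrite setU_cons.
split; [by rewrite !inE negb_or al | exact: envelope_up | by rewrite setUCA].
Qed.

Lemma walk_shift_down V s l : walk E V s -> l \in V -> l \notin s ->
  E ((V :|: [set:: s]) :\ l, l) -> walk E (V :\ l) s /\ E (V :\ l, l).
Proof.
elim: s V => [|a s IH] V /=; first by rewrite set_nil setU0.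
move=> [aV Ea w] lV; rewrite inE negb_or setU_cons => /andP[la ls] El.
have al : a != l by rewrite eq_sym.
have [w' Eal] := IH _ w (setU1r a lV) ls El.
have shift : (a |: V) :\ l = a |: (V :\ l).
  by apply/setP => y; rewrite !inE; have [->|] //= := eqVneq y a; rewrite al.
rewrite shift in w' Eal; rewrite -(setD1K lV) in aV Ea.
have aC : a \notin V :\ l by apply: contra aV; apply: setU1r.
have lC : l \notin V :\ l by rewrite setD11.
split; last exact: envelope_down Eal Ea.
by split => //; apply: envelope_down Ea Eal.
Qed.

End Envelope.

Section Cover.

Variables (k : fieldType) (n : nat) (A : 'I_n -> {set 'I_n}) (i : 'I_n -> 'I_n).
Hypotheses (hvalid : forall m, i m \notin A m) (hinj : injective i).
Implicit Types (M B S w : {set 'I_n}) (s : seq 'I_n).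
Local Notation E := (du_envelope k [set (A m, i m) | m in 'I_n]).

Lemma envelope_edge m : E (A m, i m).
Proof. by apply: env_base; apply/imsetP; exists m. Qed.

Definition endpoint M w := exists2 m, m \in M & w = A m \/ w = i m |: A m.

Definition walk_through B S w := exists s1 s2,
  [/\ walk E B (s1 ++ s2), s1 ++ s2 =i S & w = B :|: [set:: s1]].

Definition walk_cover M :=
  exists B, forall w, endpoint M w -> walk_through B (i @: M) w.

Lemma endpointU1 M m w :
  endpoint (m |: M) w -> (w = A m \/ w = i m |: A m) \/ endpoint M w.
Proof.
case=> m'; rewrite in_setU1 => /orP[/eqP -> | m'M hw]; first by left.
by right; exists m'.
Qed.

Lemma walk_through_edge B s1 s2 S m :
  walk E B (s1 ++ i m :: s2) -> s1 ++ s2 =i S -> A m = B :|: [set:: s1] ->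
  forall w, w = A m \/ w = i m |: A m -> walk_through B (i m |: S) w.
Proof.
move=> w12 eqS top1 w [->|->].
  by exists s1, (i m :: s2); split => //; apply: mem_cat_insert.
exists (rcons s1 (i m)), s2; rewrite cat_rcons; split => //.
  exact: mem_cat_insert.
by rewrite top1; apply/setP => y; rewrite !inE mem_rcons inE orbCA.
Qed.

Lemma walk_through_append B S w l :
  walk_through B S w -> l \notin B :|: S -> E (B :|: S, l) ->
  walk_through B (l |: S) w.
Proof.
move=> [s1 [s2 [w12 eqS ->]]] lBS El; exists s1, (s2 ++ [:: l]).
rewrite catA; split => //; last by apply: mem_cat_insert; rewrite cats0.
by apply/walk_cat; rewrite (set_seq_eqi eqS).
Qed.

Lemma walk_through_prepend B S w l :
  walk_through B S w -> l \in B -> E (B :\ l, l) ->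
  walk_through (B :\ l) (l |: S) w.
Proof.
move=> [s1 [s2 [w12 eqS ->]]] lB El; exists (l :: s1), s2.
rewrite setU_cons setD1K //; split => //; last exact: (mem_cat_insert (s1 := [::])).
by split; rewrite ?setD11 ?setD1K.
Qed.

Lemma walk_cover1 m : walk_cover [set m].
Proof.
exists (A m) => w [m']; rewrite inE => /eqP -> hw.
rewrite imset_set1 -[[set i m]]setU0.
apply: (walk_through_edge (s1 := [::]) (s2 := [::])) hw => //.
- by rewrite /=; split; [apply: hvalid | apply: envelope_edge |].
- by move=> y; rewrite inE.
- by rewrite set_nil setU0.
Qed.

Lemma walk_cover_up M m :
  walk_cover M -> m \notin M -> endpoint M (A m) -> walk_cover (m |: M).
Proof.
move=> [B cover] mM /cover[s1 [s2 [w12 eqS top1]]].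
have ls2 : i m \notin s2.
  by apply: contra mM => ls2; rewrite -(mem_imset _ _ hinj) -eqS mem_cat ls2 orbT.
move/walk_cat: w12 => [w1]; rewrite -top1 => w2.
have [w2' Etop] := walk_shift_up w2 (hvalid m) ls2 (envelope_edge m).
have topM : B :|: i @: M = A m :|: [set:: s2].
  rewrite top1 -setUA -(set_seq_eqi eqS); congr (_ :|: _).
  by apply/setP => y; rewrite !inE mem_cat.
exists B; rewrite imsetU1 => w /endpointU1[new | /cover old].
  apply: walk_through_edge new => //; apply/walk_cat; rewrite -top1.
  by split => //; split; [apply: hvalid | apply: envelope_edge |].
by apply: walk_through_append old _ _; rewrite topM // in_setU inE negb_or hvalid.
Qed.

Lemma walk_cover_down M m :
  walk_cover M -> m \notin M -> endpoint M (i m |: A m) -> walk_cover (m |: M).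
Proof.
move=> [B cover] mM /cover[s1 [s2 [w12 eqS top1]]].
have ls1 : i m \notin s1.
  by apply: contra mM => ls1; rewrite -(mem_imset _ _ hinj) -eqS mem_cat ls1.
have lB : i m \in B.
  by move: (setU11 (i m) (A m)); rewrite top1 in_setU inE (negbTE ls1) orbF.
have topl : (B :\ i m) :|: [set:: s1] = A m.
  apply/setP => y; rewrite -(setU1K (hvalid m)) top1 !inE.
  by case: eqVneq => // ->; rewrite (negbTE ls1).
move/walk_cat: w12 => [w1]; rewrite -{1}top1 => w2.
have Etop : E ((B :|: [set:: s1]) :\ i m, i m).
  by rewrite -top1 (setU1K (hvalid m)); apply: envelope_edge.
have [w1' El] := walk_shift_down w1 lB ls1 Etop.
exists (B :\ i m); rewrite imsetU1 => w /endpointU1[new | /cover old].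
  apply: walk_through_edge new => //; apply/walk_cat; rewrite topl.
  by split => //; split; [apply: hvalid | apply: envelope_edge |].
exact: walk_through_prepend old lB El.
Qed.

Lemma endpoint_exit M m1 m2 : edges_connected A i -> m1 \in M -> m2 \notin M ->
  exists2 m, m \notin M & endpoint M (A m) \/ endpoint M (i m |: A m).
Proof.
move=> hconn m1M m2M.
have vA m : A m \in edge_vertices A i by rewrite inE imset_f.
have /connectP[p adj last_p] := hconn _ _ (vA m1) (vA m2).
have : endpoint M (A m1) by exists m1 => //; left.
elim: p (A m1) adj last_p => [|v p IH] u /=.
  by move=> _ <-; exists m2 => //; left.
case/andP => /existsP[m huv] adj last_p hu.
have [mM | mM] := boolP (m \in M).
  apply: IH adj last_p _; exists m => //.
  by case/orP: huv => [/andP[_ /eqP ->] | /andP[/eqP -> _]]; [right | left].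
exists m => //.
by case/orP: huv => [/andP[/eqP <- _] | /andP[_ /eqP <-]]; [left | right].
Qed.

Lemma walk_cover_setT (m0 : 'I_n) : edges_connected A i -> walk_cover setT.
Proof.
move=> hconn.
have grow c : c < n -> exists2 M, walk_cover M & c < #|M|.
  elim: c => [|c IH] cn.
    by exists [set m0]; [apply: walk_cover1 | rewrite cards1].
  have [M cM] := IH (ltnW cn).
  rewrite leq_eqVlt => /orP[/eqP sizeM | ]; last by exists M.
  have /subsetPn[m2 _ m2M] : ~~ ([set: 'I_n] \subset M).
    by apply: contraL cn => /subset_leq_card; rewrite cardsT card_ord sizeM -leqNgt.
  have /card_gt0P[m1 m1M] : 0 < #|M| by rewrite -sizeM.
  have [m mM end_m] := endpoint_exit hconn m1M m2M.
  exists (m |: M); last by rewrite cardsU1 mM -sizeM.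
  by case: end_m; [apply: walk_cover_up | apply: walk_cover_down].
have [M cM sizeM] : exists2 M, walk_cover M & n.-1 < #|M|.
  by apply: grow; rewrite ltn_predL (leq_ltn_trans _ (ltn_ord m0)).
suff -> : setT = M by [].
apply/eqP; rewrite eq_sym eqEcard subsetT cardsT card_ord.
exact: leq_trans (leqSpred n) sizeM.
Qed.

Lemma walk_cover_complete_walk (m0 : 'I_n) : walk_cover setT ->
  exists2 s, walk E set0 s & perm_eq s (enum 'I_n).
Proof.
move=> [B cover].
have [s1 [s2 [w eqS _]]] : walk_through B (i @: setT) (A m0).
  by apply: cover; exists m0 => //; left.
have iT : i @: setT = setT.
  by apply/eqP; rewrite eqEcard subsetT (card_imset _ hinj) leqnn.
have mem_s y : y \in s1 ++ s2 by rewrite eqS iT inE.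
have /andP[us dis] := walk_fresh w.
have B0 : B = set0 by apply/setP => y; rewrite inE (disjointFr dis (mem_s y)).
exists (s1 ++ s2); first by rewrite -B0.
apply: uniq_perm; rewrite ?enum_uniq // => y.
by rewrite mem_s mem_enum.
Qed.

End Cover.

Theorem theorem1p4p6 (k : fieldType) (n : nat) (hn : (0 < n)%N)
    (A : 'I_n -> {set 'I_n}) (i : 'I_n -> 'I_n)
    (hvalid : forall m, i m \notin A m)
    (hdist : injective i)
    (hconn : edges_connected A i) :
  sufficient k [set (A m, i m) | m in 'I_n].
Proof.
pose m0 : 'I_n := Ordinal hn.
have cover := walk_cover_setT k hvalid hdist m0 hconn.
have [s w ps] := walk_cover_complete_walk hdist m0 cover.
exact: complete_walk_sufficient w ps.
Qed.
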